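(* Let $n\ge 2$ and let $P$ be an $n\times n$ permutation matrix which is the leaf matrix of exactly one CNM of size $n$. Then for every $k$ with $2\le k\le n-1$, the $k$-th L-subset of $P$ contains exactly one entry equal to $1$.
   Context: A complete non-ambiguous matrix (CNM) of size $n$ is an $n\times n$ matrix $M=(m_{i,j})$ with entries in $\{0,1\}$ whose support $T=\{(i,j): m_{i,j}=1\}$ (whose elements are called vertices) satisfies: (1) $(1,1)\in T$; (2) for every $p=(i,j)\in T$ with $p\neq(1,1)$, exactly one of the following holds: there is $(i',j)\in T$ with $i'<i$, or there is $(i,j')\in T$ with $j'<j$; (3) every row and every column of $M$ contains at least one vertex; (4) define the parent of $p=(i,j)\neq(1,1)$ to be $(i',j)$ with $i'<i$ maximal if such a vertex exists, and otherwise $(i,j')$ with $j'<j$ maximal; then every vertex is the parent of either zero or exactly two vertices. A vertex with no children is a leaf. The leaf matrix $p(M)$ is obtained from $M$ by replacing all non-leaf vertices by $0$ (it is a permutation matrix). For an $n\times n$ matrix and $k>1$, the $k$-th L-subset is the set of positions $\{(i,j): (i=k \text{ and } j\le k) \text{ or } (j=k \text{ and } i\le k)\}$. *)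

From mathcomp Require Import all_boot all_order all_algebra.
Set Implicit Arguments. Unset Strict Implicit. Unset Printing Implicit Defensive.
Import GRing.Theory Num.Theory.
Local Open Scope ring_scope.

(* Positions are pairs (i,j) : 'I_n * 'I_n, 0-based; the paper's (1,1) is
   the position with val i = 0 and val j = 0. Matrices have int entries. *)
Section CNM.
Variable n : nat.
Implicit Types (M : 'M[int]_n) (T : {set 'I_n * 'I_n}) (p q r : 'I_n * 'I_n).

Definition support M : {set 'I_n * 'I_n} := [set p | M p.1 p.2 == 1].

Definition is_root p : bool := (val p.1 == 0%N) && (val p.2 == 0%N).

Definition has_above T p : bool :=
  [exists q in T, (q.2 == p.2) && (val q.1 < val p.1)%N].
Definition has_left T p : bool :=
  [exists q in T, (q.1 == p.1) && (val q.2 < val p.2)%N].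

Definition is_parent T p q : bool :=
  [&& p \in T, q \in T, ~~ is_root q &
   if has_above T q then
     [&& p.2 == q.2, (val p.1 < val q.1)%N &
      [forall r in T, ((r.2 == q.2) && (val r.1 < val q.1)%N) ==> (val r.1 <= val p.1)%N]]
   else
     [&& p.1 == q.1, (val p.2 < val q.2)%N &
      [forall r in T, ((r.1 == q.1) && (val r.2 < val q.2)%N) ==> (val r.2 <= val p.2)%N]]].

Definition children T p : {set 'I_n * 'I_n} := [set q | is_parent T p q].

Definition is_cnm M : bool :=
  let T := support M in
  [&& [forall i, forall j, (M i j == 0) || (M i j == 1)],
      [exists p in T, is_root p],
      [forall p in T, ~~ is_root p ==> addb (has_above T p) (has_left T p)],
      [forall i, exists j, M i j == 1],
      [forall j, exists i, M i j == 1] &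
      [forall p in T, (#|children T p| == 0)%N || (#|children T p| == 2)%N]].

Definition is_leaf M p : bool :=
  (p \in support M) && (#|children (support M) p| == 0)%N.

Definition leaf_mx M : 'M[int]_n :=
  \matrix_(i, j) (if is_leaf M (i, j) then 1 else 0).

(* k-th L-subset, k given in the paper's 1-based convention *)
Definition Lsubset (k : nat) : {set 'I_n * 'I_n} :=
  [set p | ((val p.1).+1 == k) && ((val p.2).+1 <= k)%N
        || ((val p.2).+1 == k) && ((val p.1).+1 <= k)%N].
End CNM.

From Pilot Require Import Defs.
From mathcomp Require Import all_boot all_order all_algebra.
From mathcomp Require Import perm zify.
Set Implicit Arguments. Unset Strict Implicit. Unset Printing Implicit Defensive.

(* Condition (4)
   says that a vertex has a vertex below it iff it has one to its right
   (card_children); this gives a geometric description cnm_set of CNM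
   supports, whose leaves are the vertices with nothing below them.  Two
   local moves, each displacing a single vertex (move_to_row_below,
   move_within_row, built on the move principle move_twin), produce a
   different CNM support with the same leaves; transposition exchanges rows
   and columns.  Writing P = perm_mx s, the leaf (i, s i) is the rightmost
   vertex of row i and the lowest vertex of column s i.  Let block m be the
   set of i < m with s i < m.  No proper top-left block is closed
   (no_closed_block), so #|block m| < m; and if #|block m| = m - 1 =
   #|block (m + 1)|, the unique row and column leaving the m x m block put T
   in a configuration around (m, m) where one of the moves applies
   (corner_twin), contradicting uniqueness.  Hence #|block m| = m - 1 for
   0 < m < n, and the 1-entries of the k-th L-subset are the (i, s i) with
   i in block k but not in block (k - 1): exactly one of them. *)

Ltac ord_vals := repeat match goal with
 | H : @eq ?A ?x ?y |- _ =>
     lazymatch A with nat => fail | _ =>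
       lazymatch goal with
       | _ : @nat_of_ord _ x = @nat_of_ord _ y |- _ => fail
       | _ => have := f_equal (@nat_of_ord _) H; intro
       end
     end
 end.
Ltac keep_arith := repeat match goal with
 | H : ?t |- _ => lazymatch t with
     | is_true (leq _ _) => fail
     | @eq nat _ _ => fail
     | not (@eq nat _ _) => fail
     | not (is_true (leq _ _)) => fail
     | _ => clear H
   end
 end.
Ltac ord_lia := ord_vals; keep_arith; simpl in *; lia.

Section Geometry.
Variable n : nat.
Notation pos := ('I_n * 'I_n)%type.
Implicit Types (T : {set pos}) (p q r : pos).

Definition has_below T p : bool :=
  [exists q in T, (q.2 == p.2) && (val p.1 < val q.1)].
Definition has_right T p : bool :=
  [exists q in T, (q.1 == p.1) && (val p.2 < val q.2)].

Lemma aboveP T p : reflect (exists2 q, q \in T & q.2 = p.2 /\ q.1 < p.1)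
  (has_above T p).
Proof.
apply: (iffP existsP) => [[q /and3P[qT /eqP e l]]|[q qT [e l]]]; first by exists q.
by exists q; rewrite qT e eqxx l.
Qed.

Lemma leftP T p : reflect (exists2 q, q \in T & q.1 = p.1 /\ q.2 < p.2)
  (has_left T p).
Proof.
apply: (iffP existsP) => [[q /and3P[qT /eqP e l]]|[q qT [e l]]]; first by exists q.
by exists q; rewrite qT e eqxx l.
Qed.

Lemma belowP T p : reflect (exists2 q, q \in T & q.2 = p.2 /\ p.1 < q.1)
  (has_below T p).
Proof.
apply: (iffP existsP) => [[q /and3P[qT /eqP e l]]|[q qT [e l]]]; first by exists q.
by exists q; rewrite qT e eqxx l.
Qed.

Lemma rightP T p : reflect (exists2 q, q \in T & q.1 = p.1 /\ p.2 < q.2)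
  (has_right T p).
Proof.
apply: (iffP existsP) => [[q /and3P[qT /eqP e l]]|[q qT [e l]]]; first by exists q.
by exists q; rewrite qT e eqxx l.
Qed.

Lemma pos_inj p q : p.1 = q.1 :> nat -> p.2 = q.2 :> nat -> p = q.
Proof. by case: p q => [a b] [c d] /= /val_inj -> /val_inj ->. Qed.

Lemma pos_neq p q : p.1 <> q.1 :> nat \/ p.2 <> q.2 :> nat -> p != q.
Proof. by move=> h; apply/eqP => e; rewrite e in h; case: h. Qed.

Lemma root_vals p : is_root p -> p.1 = 0 :> nat /\ p.2 = 0 :> nat.
Proof. by case/andP => /eqP a /eqP b. Qed.

Lemma nonroot_of_row p : 0 < p.1 -> ~~ is_root p.
Proof. by case: p => [[a ha] b]; rewrite /is_root /=; case: a ha. Qed.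

Lemma nonroot_of_col p : 0 < p.2 -> ~~ is_root p.
Proof. by case: p => [a [b hb]]; rewrite /is_root /= andbC; case: b hb. Qed.

Lemma ex_minimal (A : pred pos) (f : pos -> nat) q0 :
  A q0 -> exists2 q, A q & forall r, A r -> f q <= f r.
Proof. by move=> Aq0; case: (arg_minnP f Aq0) => q Aq Hq; exists q. Qed.

Lemma ex_maximal (A : pred pos) (f : pos -> nat) q0 :
  A q0 -> exists2 q, A q & forall r, A r -> f r <= f q.
Proof. by move=> Aq0; case: (arg_maxnP f Aq0) => q Aq Hq; exists q. Qed.

End Geometry.

Arguments ex_minimal {n} A f q0 _.
Arguments ex_maximal {n} A f q0 _.

Section Children.
Variable n : nat.
Notation pos := ('I_n * 'I_n)%type.
Variable T : {set pos}.
Implicit Types (p q r : pos).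

Hypothesis above_xor_left :
  forall p, p \in T -> ~~ is_root p -> addb (has_above T p) (has_left T p).

Lemma parent_above p q : is_parent T p q -> has_above T q ->
  [/\ p \in T, q \in T, p.2 = q.2, p.1 < q.1 &
   forall r, r \in T -> r.2 = q.2 -> r.1 < q.1 -> r.1 <= p.1].
Proof.
case/and4P=> pT qT _ + ha; rewrite ha => /and3P[/eqP e l /forallP F].
split=> // r rT er lr; by move: (F r); rewrite rT er eqxx lr.
Qed.

Lemma parent_left p q : is_parent T p q -> ~~ has_above T q ->
  [/\ p \in T, q \in T, p.1 = q.1, p.2 < q.2 &
   forall r, r \in T -> r.1 = q.1 -> r.2 < q.2 -> r.2 <= p.2].
Proof.
case/and4P=> pT qT _ + ha; rewrite (negbTE ha) => /and3P[/eqP e l /forallP F].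
split=> // r rT er lr; by move: (F r); rewrite rT er eqxx lr.
Qed.

Lemma below_child p : p \in T -> has_below T p ->
  exists2 q, is_parent T p q & has_above T q.
Proof.
move=> pT /belowP[q0 q0T [e0 l0]].
have [|q /andP[qT /andP[/eqP e l]] qmin] := ex_minimal
  (fun q => (q \in T) && ((q.2 == p.2) && (p.1 < q.1))) (fun q => nat_of_ord q.1) q0.
  by rewrite q0T e0 eqxx l0.
have qa : has_above T q by apply/aboveP; exists p.
exists q => //; rewrite /is_parent pT qT (nonroot_of_row (leq_ltn_trans (leq0n _) l)) /=.
rewrite qa e eqxx l /=; apply/forallP => r; apply/implyP => rT.
apply/implyP => /andP[/eqP er lr]; rewrite leqNgt; apply/negP => lpr.
by move: (qmin r); rewrite /= rT er eqxx lpr => /(_ isT); ord_lia.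
Qed.

Lemma right_child p : p \in T -> has_right T p ->
  exists2 q, is_parent T p q & ~~ has_above T q.
Proof.
move=> pT /rightP[q0 q0T [e0 l0]].
have [|q /andP[qT /andP[/eqP e l]] qmin] := ex_minimal
  (fun q => (q \in T) && ((q.1 == p.1) && (p.2 < q.2))) (fun q => nat_of_ord q.2) q0.
  by rewrite q0T e0 eqxx l0.
have nrq : ~~ is_root q := nonroot_of_col (leq_ltn_trans (leq0n _) l).
have ql : has_left T q by apply/leftP; exists p.
have nqa : ~~ has_above T q by move: (above_xor_left qT nrq); rewrite ql addbT.
exists q => //; rewrite /is_parent pT qT nrq /= (negbTE nqa) e eqxx l /=.
apply/forallP => r; apply/implyP => rT; apply/implyP => /andP[/eqP er lr].
rewrite leqNgt; apply/negP => lpr.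
by move: (qmin r); rewrite /= rT er eqxx lpr => /(_ isT); ord_lia.
Qed.

Lemma card_lower_children p : p \in T ->
  #|[set q | is_parent T p q & has_above T q]| = has_below T p.
Proof.
move=> pT; case pb: (has_below T p).
  have [q pq qa] := below_child pT pb.
  apply/eqP/cards1P; exists q; apply/setP => q'; rewrite !inE.
  apply/andP/eqP => [[pq' q'a]|->] //.
  have [_ qT e l qmax] := parent_above pq qa.
  have [_ q'T e' l' q'max] := parent_above pq' q'a.
  apply: pos_inj; last by rewrite -e -e'.
  move: (qmax q' q'T) (q'max q qT); rewrite -e -e' => h h'.
  by move: (h (erefl _)) (h' (erefl _)); ord_lia.
apply/eqP; rewrite cards_eq0; apply/eqP/setP => q; rewrite !inE.
apply/negP => /andP[pq qa]; have [_ qT e l _] := parent_above pq qa.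
suff: has_below T p by rewrite pb.
by apply/belowP; exists q.
Qed.

Lemma card_right_children p : p \in T ->
  #|[set q | is_parent T p q & ~~ has_above T q]| = has_right T p.
Proof.
move=> pT; case pr: (has_right T p).
  have [q pq qa] := right_child pT pr.
  apply/eqP/cards1P; exists q; apply/setP => q'; rewrite !inE.
  apply/andP/eqP => [[pq' q'a]|->] //.
  have [_ qT e l qmax] := parent_left pq qa.
  have [_ q'T e' l' q'max] := parent_left pq' q'a.
  apply: pos_inj; first by rewrite -e -e'.
  move: (qmax q' q'T) (q'max q qT); rewrite -e -e' => h h'.
  by move: (h (erefl _)) (h' (erefl _)); ord_lia.
apply/eqP; rewrite cards_eq0; apply/eqP/setP => q; rewrite !inE.
apply/negP => /andP[pq qa]; have [_ qT e l _] := parent_left pq qa.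
suff: has_right T p by rewrite pr.
by apply/rightP; exists q.
Qed.

(* Hence condition (4) says exactly: a vertex lies below p iff one lies to
   its right. *)
Lemma card_children p : p \in T ->
  #|children T p| = has_below T p + has_right T p.
Proof.
move=> pT; rewrite -card_lower_children // -card_right_children //.
rewrite -cardsUI; set I := _ :&: _.
have -> : I = set0.
  by apply/setP => q; rewrite !inE; case: (has_above T q); rewrite ?andbF.
rewrite cards0 addn0; apply: eq_card => q; rewrite !inE.
by case: (has_above T q); rewrite ?andbT ?andbF ?orbF.
Qed.

End Children.

Section CnmSets.
Variable n : nat.
Notation pos := ('I_n * 'I_n)%type.
Implicit Types (T : {set pos}) (p q : pos) (M : 'M[int]_n).

(* The supports of CNMs, described geometrically: there is a root,
   condition (2) holds, condition (4) holds in the form given by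
   card_children, and every row and column is occupied. *)
Definition cnm_set T : Prop :=
  [/\ exists2 p, p \in T & is_root p,
      (forall p, p \in T -> ~~ is_root p -> addb (has_above T p) (has_left T p)),
      (forall p, p \in T -> has_below T p = has_right T p),
      (forall i, exists j, (i, j) \in T) & (forall j, exists i, (i, j) \in T)].

Definition leaf_set T p : bool := (p \in T) && ~~ has_below T p.

Definition mx_of_set T : 'M[int]_n :=
  \matrix_(i, j) (if (i, j) \in T then 1%R else 0%R).

Lemma support_mx_of_set T : Defs.support (mx_of_set T) = T.
Proof. by apply/setP => -[i j]; rewrite inE mxE /=; case: ((i, j) \in T). Qed.

Lemma cnm_set_support M : is_cnm M -> cnm_set (Defs.support M).
Proof.
case/and5P=> _ /existsP[r /andP[rT rr]] /forallP X /forallP R.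
case/andP=> /forallP C /forallP K.
have Xp p : p \in Defs.support M -> ~~ is_root p ->
    addb (has_above (Defs.support M) p) (has_left (Defs.support M) p).
  by move=> pT nr; move: (X p); rewrite pT nr.
split=> [|//||i|j]; first by exists r.
- move=> p pT; move: (K p); rewrite pT card_children //.
  by case: (has_below _ p); case: (has_right _ p).
- by have /existsP[j e] := R i; exists j; rewrite inE.
- by have /existsP[i e] := C j; exists i; rewrite inE.
Qed.

Lemma cnm_mx_of_set T : cnm_set T -> is_cnm (mx_of_set T).
Proof.
case=> [[r rT rr] X B R C]; rewrite /is_cnm support_mx_of_set.
apply/and5P; split; last apply/andP; try split.
- by apply/forallP => i; apply/forallP => j; rewrite mxE; case: ((i, j) \in T).
- by apply/existsP; exists r; rewrite rT.
- by apply/forallP => p; apply/implyP => pT; apply/implyP; apply: X.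
- by apply/forallP => i; have [j e] := R i; apply/existsP; exists j; rewrite mxE e.
- by apply/forallP => j; have [i e] := C j; apply/existsP; exists i; rewrite mxE e.
- apply/forallP => p; apply/implyP => pT; rewrite card_children // (B p pT).
  by case: (has_right T p).
Qed.

Lemma is_leafE M p :
  cnm_set (Defs.support M) -> is_leaf M p = leaf_set (Defs.support M) p.
Proof.
case=> _ X B _ _; rewrite /is_leaf /leaf_set; case pT: (p \in Defs.support M) => //=.
by rewrite card_children // (B p pT); case: (has_right _ p).
Qed.

(* Two CNM supports with the same leaves; the uniqueness hypothesis of the
   theorem says that no CNM support has a distinct twin. *)
Definition has_twin T : Prop :=
  exists T', [/\ cnm_set T', leaf_set T' =1 leaf_set T & T' != T].

End CnmSets.

Section Transpose.
Variable n : nat.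
Notation pos := ('I_n * 'I_n)%type.
Implicit Types (T : {set pos}) (p : pos).

Definition tr_pos p : pos := (p.2, p.1).
Definition tr_set T : {set pos} := [set p | tr_pos p \in T].

Lemma in_tr_set T p : (p \in tr_set T) = (tr_pos p \in T).
Proof. by rewrite inE. Qed.

Lemma tr_posK p : tr_pos (tr_pos p) = p. Proof. by case: p. Qed.

Lemma tr_setK T : tr_set (tr_set T) = T.
Proof. by apply/setP => p; rewrite !inE tr_posK. Qed.

Lemma above_tr T p : has_above (tr_set T) p = has_left T (tr_pos p).
Proof.
apply/aboveP/leftP => [[q qT [e l]]|[q qT [e l]]].
- by exists (tr_pos q); rewrite -?in_tr_set.
- by exists (tr_pos q); rewrite ?in_tr_set ?tr_posK.
Qed.

Lemma left_tr T p : has_left (tr_set T) p = has_above T (tr_pos p).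
Proof.
apply/leftP/aboveP => [[q qT [e l]]|[q qT [e l]]].
- by exists (tr_pos q); rewrite -?in_tr_set.
- by exists (tr_pos q); rewrite ?in_tr_set ?tr_posK.
Qed.

Lemma below_tr T p : has_below (tr_set T) p = has_right T (tr_pos p).
Proof.
apply/belowP/rightP => [[q qT [e l]]|[q qT [e l]]].
- by exists (tr_pos q); rewrite -?in_tr_set.
- by exists (tr_pos q); rewrite ?in_tr_set ?tr_posK.
Qed.

Lemma right_tr T p : has_right (tr_set T) p = has_below T (tr_pos p).
Proof.
apply/rightP/belowP => [[q qT [e l]]|[q qT [e l]]].
- by exists (tr_pos q); rewrite -?in_tr_set.
- by exists (tr_pos q); rewrite ?in_tr_set ?tr_posK.
Qed.

Lemma cnm_set_tr T : cnm_set T -> cnm_set (tr_set T).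
Proof.
case=> [[r rT rr] X B R C]; split.
- by exists (tr_pos r); rewrite ?in_tr_set ?tr_posK // /is_root andbC.
- move=> p pT nr; rewrite above_tr left_tr addbC; apply: X; rewrite -?in_tr_set //.
  by rewrite /is_root andbC.
- by move=> p pT; rewrite below_tr right_tr B // -in_tr_set.
- by move=> i; have [j e] := C i; exists j; rewrite in_tr_set.
- by move=> j; have [i e] := R j; exists i; rewrite in_tr_set.
Qed.

Lemma leaf_set_tr T p : cnm_set T -> leaf_set (tr_set T) p = leaf_set T (tr_pos p).
Proof.
case=> _ _ B _ _; rewrite /leaf_set in_tr_set below_tr.
by case pT: (tr_pos p \in T) => //=; rewrite B.
Qed.

Lemma has_twin_tr T : cnm_set T -> has_twin (tr_set T) -> has_twin T.
Proof.
move=> cT [T' [cT' same_leaves T'_new]]; exists (tr_set T'); split.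
- exact: cnm_set_tr.
- by move=> p; rewrite leaf_set_tr // same_leaves leaf_set_tr // tr_posK.
- by apply: contra T'_new => /eqP <-; rewrite tr_setK.
Qed.

End Transpose.

Section MoveVertex.
Variable n : nat.
Notation pos := ('I_n * 'I_n)%type.
Implicit Types (T : {set pos}) (p q v w : pos).

Definition move_vertex T v w : {set pos} := w |: (T :\ v).

Lemma in_move_vertex T v w p :
  (p \in move_vertex T v w) = (p == w) || (p != v) && (p \in T).
Proof. by rewrite !inE. Qed.

Lemma mem_move_vertex T v w p : p != v -> p \in T -> p \in move_vertex T v w.
Proof. by move=> pv pT; rewrite in_move_vertex pv pT orbT. Qed.

Variables (T : {set pos}) (v w : pos).
Local Notation T' := (move_vertex T v w).
Hypotheses (cT : cnm_set T) (vT : v \in T) (wnT : w \notin T).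
Hypothesis nonroot_v : ~~ is_root v.
Hypotheses (below_v : has_below T v) (below_w : has_below T' w).
Hypothesis below_kept :
  forall p, p \in T -> p != v -> has_below T' p = has_below T p.

Lemma move_cnm_set :
  addb (has_above T' w) (has_left T' w) -> has_right T' w ->
  (forall p, p \in T -> p != v -> ~~ is_root p ->
     addb (has_above T' p) (has_left T' p)) ->
  (forall p, p \in T -> p != v -> has_right T' p = has_right T p) ->
  (exists2 q, q \in T' & q.1 = v.1) -> (exists2 q, q \in T' & q.2 = v.2) ->
  cnm_set T'.
Proof.
case: cT => [[r rT rr] X B R C] Xw right_w Xo right_kept [qr qrT qr1] [qc qcT qc2].
split.
- exists r => //; apply: mem_move_vertex rT.
  by apply: contraTneq rr => ->.
- by move=> p; rewrite in_move_vertex => /orP[/eqP ->|/andP[pv pT]] nrp; [|apply: Xo].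
- move=> p; rewrite in_move_vertex => /orP[/eqP ->|/andP[pv pT]].
    by rewrite below_w right_w.
  by rewrite below_kept // right_kept // B.
- move=> i; case: (eqVneq i v.1) => [->|iv].
    by exists qr.2; rewrite -qr1 -surjective_pairing.
  have [j ij] := R i; exists j; apply: mem_move_vertex ij.
  by apply: contraNneq iv => <-.
- move=> j; case: (eqVneq j v.2) => [->|jv].
    by exists qc.1; rewrite -qc2 -surjective_pairing.
  have [i ij] := C j; exists i; apply: mem_move_vertex ij.
  by apply: contraNneq jv => <-.
Qed.

(* The leaves are unchanged: v and w are not leaves, and no other vertex
   gains or loses a vertex below it. *)
Lemma move_leaves : leaf_set T' =1 leaf_set T.
Proof.
move=> p; rewrite /leaf_set in_move_vertex.
case: (eqVneq p w) => [->|pw] /=; first by rewrite below_w (negbTE wnT).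
case: (eqVneq p v) => [->|pv] /=; first by rewrite vT below_v.
by case pT: (p \in T) => //=; rewrite below_kept.
Qed.

Lemma move_neq : T' != T.
Proof.
by apply: contraNneq wnT => <-; rewrite in_move_vertex eqxx.
Qed.

Lemma move_twin :
  addb (has_above T' w) (has_left T' w) -> has_right T' w ->
  (forall p, p \in T -> p != v -> ~~ is_root p ->
     addb (has_above T' p) (has_left T' p)) ->
  (forall p, p \in T -> p != v -> has_right T' p = has_right T p) ->
  (exists2 q, q \in T' & q.1 = v.1) -> (exists2 q, q \in T' & q.2 = v.2) ->
  has_twin T.
Proof.
move=> Xw right_w Xo right_kept row_v col_v; exists T'.
by split; [exact: move_cnm_set | exact: move_leaves | exact: move_neq].
Qed.

End MoveVertex.

(* The vertex v has a vertex to its left (hence none above it),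
   b is the next vertex below v in its column, and w lies in the row of b,
   left of the column of v, in a column having vertices u1 above and u2
   below the row of b.  Then v can be moved to w. *)
Section MoveToRowBelow.
Variable n : nat.
Notation pos := ('I_n * 'I_n)%type.
Implicit Types (p q r : pos).
Variables (T : {set pos}) (v b w u1 u2 : pos).
Local Notation T' := (move_vertex T v w).
Hypotheses (cT : cnm_set T) (vT : v \in T) (bT : b \in T).
Hypotheses (u1T : u1 \in T) (u2T : u2 \in T).
Hypothesis left_v : has_left T v.
Hypotheses (b_col : b.2 = v.2) (v_above_b : v.1 < b.1).
Hypothesis b_next : forall r, r \in T -> r.2 = v.2 -> v.1 < r.1 -> b.1 <= r.1.
Hypotheses (w_row : w.1 = b.1) (w_left : w.2 < v.2).
Hypotheses (u1_col : u1.2 = w.2) (u1_above : u1.1 < b.1).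
Hypotheses (u2_col : u2.2 = w.2) (u2_below : b.1 < u2.1).

Lemma b_nonroot_down : ~~ is_root b.
Proof. by apply: nonroot_of_row; ord_lia. Qed.

Lemma v_nonroot_down : ~~ is_root v.
Proof. by have [q _ [_ l]] := leftP _ _ left_v; apply: nonroot_of_col; ord_lia. Qed.

Lemma v_no_above_down : ~~ has_above T v.
Proof.
by case: cT => _ X _ _ _; move: (X v vT v_nonroot_down); rewrite left_v addbT.
Qed.

Lemma b_no_left_down : ~~ has_left T b.
Proof.
case: cT => _ X _ _ _; have ab : has_above T b.
  by apply/aboveP; exists v => //; rewrite b_col.
by move: (X b bT b_nonroot_down); rewrite ab.
Qed.

Lemma v_below_down : has_below T v.
Proof. by apply/belowP; exists b. Qed.

Lemma w_notin_down : w \notin T.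
Proof.
apply/negP => wT; move/negP: b_no_left_down; apply; apply/leftP.
by exists w => //; split; [|ord_lia].
Qed.

Lemma below_kept_down p : p \in T -> p != v -> has_below T' p = has_below T p.
Proof.
move=> pT pv; apply/belowP/belowP => -[q qT [e l]].
- move: qT; rewrite in_move_vertex => /orP[/eqP qw|/andP[_ qT]]; last by exists q.
  by subst q; exists u2 => //; split; [rewrite u2_col | ord_lia].
- exists q => //; apply: mem_move_vertex qT; apply: contraNneq v_no_above_down => qv.
  by apply/aboveP; exists p => //; rewrite -qv; split; [rewrite e|].
Qed.

Lemma right_kept_down p : p \in T -> p != v -> has_right T' p = has_right T p.
Proof.
move=> pT pv; apply/rightP/rightP => -[q qT [e l]].
- move: qT; rewrite in_move_vertex => /orP[/eqP qw|/andP[_ qT]]; last by exists q.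
  subst q; move/negP: b_no_left_down; case; apply/leftP.
  by exists p => //; split; [rewrite -e w_row | ord_lia].
- case: (eqVneq q v) => [qv|qv]; last by exists q; [apply: mem_move_vertex|].
  subst q; case: cT => _ _ B _ _.
  have /rightP[r rT [er lr]] : has_right T v by rewrite -B // v_below_down.
  exists r; last by split; [rewrite er | ord_lia].
  by apply: mem_move_vertex rT; apply: pos_neq; right; ord_lia.
Qed.

Lemma above_kept_down p : p \in T -> p != v -> p != b ->
  has_above T' p = has_above T p.
Proof.
move=> pT pv pb; apply/aboveP/aboveP => -[q qT [e l]].
- move: qT; rewrite in_move_vertex => /orP[/eqP qw|/andP[_ qT]]; last by exists q.
  by subst q; exists u1 => //; split; [rewrite u1_col | ord_lia].
- case: (eqVneq q v) => [qv|qv]; last by exists q; [apply: mem_move_vertex|].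
  subst q; have bp := b_next pT (esym e) l.
  exists b; first by apply: mem_move_vertex bT; apply: pos_neq; left; ord_lia.
  split; first by rewrite b_col e.
  have : b.1 <> p.1 :> nat.
    move=> eb1; move/negP: pb; apply; apply/eqP/pos_inj => //.
    by ord_vals; rewrite b_col e.
  ord_lia.
Qed.

Lemma left_kept_down p : p \in T -> p != v -> p != b ->
  has_left T' p = has_left T p.
Proof.
move=> pT pv pb; apply/leftP/leftP => -[q qT [e l]].
- move: qT; rewrite in_move_vertex => /orP[/eqP qw|/andP[_ qT]]; last by exists q.
  subst q; exists b => //; split; first by rewrite -e w_row.
  have [pb2|] : p.2 < b.2 \/ b.2 <= p.2 by ord_lia.
    by move/negP: b_no_left_down; case; apply/leftP; exists p => //; rewrite -e w_row.
  have : b.2 <> p.2 :> nat.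
    move=> eb2; move/negP: pb; apply; apply/eqP/pos_inj => //.
    by ord_vals; rewrite -e w_row.
  ord_lia.
- case: (eqVneq q v) => [qv|qv]; last by exists q; [apply: mem_move_vertex|].
  subst q; have [r rT [er lr]] := leftP _ _ left_v.
  exists r; last by split; [rewrite er | ord_lia].
  by apply: mem_move_vertex rT; apply: pos_neq; right; ord_lia.
Qed.

Lemma w_neighbours_down :
  [/\ has_above T' w, ~~ has_left T' w, has_below T' w & has_right T' w].
Proof.
have mem_u u : u \in T -> u.2 = w.2 -> u \in T'.
  by move=> uT uw; apply: mem_move_vertex uT; apply: pos_neq; right; ord_lia.
split.
- by apply/aboveP; exists u1; [apply: mem_u | split; [|ord_lia]].
- apply/negP => /leftP[q qT' [e l]]; move: qT'.
  rewrite in_move_vertex => /orP[/eqP qw|/andP[_ qT]]; first by subst q; ord_lia.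
  move/negP: b_no_left_down; apply; apply/leftP.
  by exists q => //; split; [rewrite e|ord_lia].
- by apply/belowP; exists u2; [apply: mem_u | split; [|ord_lia]].
- apply/rightP; exists b; last by split; [|ord_lia].
  by apply: mem_move_vertex bT; apply: pos_neq; left; ord_lia.
Qed.

Lemma b_neighbours_down : ~~ has_above T' b /\ has_left T' b.
Proof.
split; last by apply/leftP; exists w; [rewrite in_move_vertex eqxx | split; [|ord_lia]].
apply/negP => /aboveP[q qT' [e l]]; move: qT'.
rewrite in_move_vertex => /orP[/eqP qw|/andP[qv qT]]; first by subst q; ord_lia.
have [qv1|[qv1|qv1]] : q.1 < v.1 \/ q.1 = v.1 :> nat \/ v.1 < q.1 by ord_lia.
- by move/negP: v_no_above_down; apply; apply/aboveP; exists q => //; rewrite e b_col.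
- by move/negP: qv; apply; apply/eqP/pos_inj => //; ord_vals; rewrite e b_col.
- by have := b_next qT (etrans e b_col) qv1; ord_lia.
Qed.

Lemma move_to_row_below : has_twin T.
Proof.
case: cT => _ X _ _ _.
have [above_w no_left_w below_w right_w] := w_neighbours_down.
have [no_above_b left_b] := b_neighbours_down.
apply: (move_twin cT vT w_notin_down v_nonroot_down v_below_down below_w
  below_kept_down _ right_w).
- by rewrite above_w (negbTE no_left_w).
- move=> p pT pv nrp; case: (eqVneq p b) => [->|pb].
    by rewrite (negbTE no_above_b) left_b.
  by rewrite above_kept_down // left_kept_down //; apply: X.
- exact: right_kept_down.
- have [r rT [er lr]] := leftP _ _ left_v.
  by exists r => //; apply: mem_move_vertex rT; apply: pos_neq; right; ord_lia.
- by exists b => //; apply: mem_move_vertex bT; apply: pos_neq; left; ord_lia.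
Qed.

End MoveToRowBelow.

(* The vertex v has vertices above and below it (hence one to
   its right and none to its left), w lies in the row of v, strictly left of
   every other vertex of that row, in a column having vertices u1 above and
   u2 below the row of v.  Then v can be moved to w. *)
Section MoveWithinRow.
Variable n : nat.
Notation pos := ('I_n * 'I_n)%type.
Implicit Types (p q r : pos).
Variables (T : {set pos}) (v w u1 u2 : pos).
Local Notation T' := (move_vertex T v w).
Hypotheses (cT : cnm_set T) (vT : v \in T) (u1T : u1 \in T) (u2T : u2 \in T).
Hypotheses (above_v : has_above T v) (below_v : has_below T v).
Hypotheses (w_row : w.1 = v.1) (w_col : w.2 <> v.2 :> nat).
Hypothesis w_first : forall q, q \in T -> q.1 = v.1 -> q != v -> w.2 < q.2.
Hypotheses (u1_col : u1.2 = w.2) (u1_above : u1.1 < v.1).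
Hypotheses (u2_col : u2.2 = w.2) (u2_below : v.1 < u2.1).

Lemma v_nonroot_row : ~~ is_root v.
Proof. by have [q _ [_ l]] := aboveP _ _ above_v; apply: nonroot_of_row; ord_lia. Qed.

Lemma v_no_left_row : ~~ has_left T v.
Proof.
by case: cT => _ X _ _ _; move: (X v vT v_nonroot_row); rewrite above_v.
Qed.

Lemma v_right_row : has_right T v.
Proof. by case: cT => _ _ B _ _; rewrite -B. Qed.

Lemma w_notin_row : w \notin T.
Proof.
apply/negP => wT.
by have := w_first wT w_row (pos_neq (or_intror w_col)); rewrite ltnn.
Qed.

Lemma below_kept_row p : p \in T -> p != v -> has_below T' p = has_below T p.
Proof.
move=> pT pv; apply/belowP/belowP => -[q qT [e l]].
- move: qT; rewrite in_move_vertex => /orP[/eqP qw|/andP[_ qT]]; last by exists q.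
  by subst q; exists u2 => //; split; [rewrite u2_col | ord_lia].
- case: (eqVneq q v) => [qv|qv]; last by exists q; [apply: mem_move_vertex|].
  subst q; have [r rT [er lr]] := belowP _ _ below_v.
  exists r; last by split; [rewrite er | ord_lia].
  by apply: mem_move_vertex rT; apply: pos_neq; left; ord_lia.
Qed.

Lemma right_kept_row p : p \in T -> p != v -> has_right T' p = has_right T p.
Proof.
move=> pT pv; apply/rightP/rightP => -[q qT [e l]].
- move: qT; rewrite in_move_vertex => /orP[/eqP qw|/andP[_ qT]]; last by exists q.
  by subst q; have := w_first pT (etrans (esym e) w_row) pv; ord_lia.
- case: (eqVneq q v) => [qv|qv]; last by exists q; [apply: mem_move_vertex|].
  by subst q; move/negP: v_no_left_row; case; apply/leftP; exists p.
Qed.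

Lemma above_kept_row p : p \in T -> p != v -> has_above T' p = has_above T p.
Proof.
move=> pT pv; apply/aboveP/aboveP => -[q qT [e l]].
- move: qT; rewrite in_move_vertex => /orP[/eqP qw|/andP[_ qT]]; last by exists q.
  by subst q; exists u1 => //; split; [rewrite u1_col | ord_lia].
- case: (eqVneq q v) => [qv|qv]; last by exists q; [apply: mem_move_vertex|].
  subst q; have [r rT [er lr]] := aboveP _ _ above_v.
  exists r; last by split; [rewrite er | ord_lia].
  by apply: mem_move_vertex rT; apply: pos_neq; left; ord_lia.
Qed.

Lemma left_kept_row p : p \in T -> p != v -> has_left T' p = has_left T p.
Proof.
move=> pT pv; apply/leftP/leftP => -[q qT [e l]].
- move: qT; rewrite in_move_vertex => /orP[/eqP qw|/andP[_ qT]]; last by exists q.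
  subst q; have [pv2|[pv2|pv2]] : p.2 < v.2 \/ p.2 = v.2 :> nat \/ v.2 < p.2 by ord_lia.
  + by move/negP: v_no_left_row; case; apply/leftP; exists p => //; rewrite -e w_row.
  + by move/negP: pv; case; apply/eqP/pos_inj => //; ord_vals; rewrite -e w_row.
  + by exists v => //; rewrite -e w_row.
- case: (eqVneq q v) => [qv|qv]; last by exists q; [apply: mem_move_vertex|].
  subst q; exists w; first by rewrite in_move_vertex eqxx.
  by split; [rewrite w_row e | apply: w_first].
Qed.

Lemma w_neighbours_row :
  [/\ has_above T' w, ~~ has_left T' w, has_below T' w & has_right T' w].
Proof.
have mem_u u : u \in T -> u.2 = w.2 -> u \in T'.
  by move=> uT uw; apply: mem_move_vertex uT; apply: pos_neq; right; ord_lia.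
split.
- by apply/aboveP; exists u1; [apply: mem_u | split; [|ord_lia]].
- apply/negP => /leftP[q qT' [e l]]; move: qT'.
  rewrite in_move_vertex => /orP[/eqP qw|/andP[qv qT]]; first by subst q; ord_lia.
  by have := w_first qT (etrans e w_row) qv; ord_lia.
- by apply/belowP; exists u2; [apply: mem_u | split; [|ord_lia]].
- have /rightP[r rT [er lr]] := v_right_row.
  have rv : r != v by apply: pos_neq; right; ord_lia.
  apply/rightP; exists r; first exact: mem_move_vertex.
  by split; [rewrite w_row | apply: w_first].
Qed.

Lemma move_within_row : has_twin T.
Proof.
case: cT => _ X _ _ _.
have [above_w no_left_w below_w right_w] := w_neighbours_row.
apply: (move_twin cT vT w_notin_row v_nonroot_row below_v below_w
  below_kept_row _ right_w).
- by rewrite above_w (negbTE no_left_w).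
- by move=> p pT pv nrp; rewrite above_kept_row // left_kept_row //; apply: X.
- exact: right_kept_row.
- by exists w; [rewrite in_move_vertex eqxx | rewrite w_row].
- have [r rT [er lr]] := aboveP _ _ above_v.
  by exists r => //; apply: mem_move_vertex rT; apply: pos_neq; left; ord_lia.
Qed.

End MoveWithinRow.

Section Corner.
Variable n : nat.
Notation pos := ('I_n * 'I_n)%type.
Implicit Types (T : {set pos}) (p q r : pos).

Lemma first_in_row T (i : 'I_n) : cnm_set T ->
  exists2 t, t \in T & t.1 = i /\ ~~ has_left T t.
Proof.
case=> _ _ _ R _; have [j ij] := R i.
have [|t /andP[tT /eqP t1] tmin] := ex_minimal
  (fun q => (q \in T) && (q.1 == i)) (fun q => nat_of_ord q.2) (i, j).
  by rewrite ij eqxx.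
exists t => //; split=> //; apply/negP => /leftP[q qT [e l]].
by have := tmin q; rewrite /= qT e t1 eqxx => /(_ isT); ord_lia.
Qed.

Lemma first_in_col T (j : 'I_n) : cnm_set T ->
  exists2 t, t \in T & t.2 = j /\ ~~ has_above T t.
Proof.
case=> _ _ _ _ C; have [i ij] := C j.
have [|t /andP[tT /eqP t2] tmin] := ex_minimal
  (fun q => (q \in T) && (q.2 == j)) (fun q => nat_of_ord q.1) (i, j).
  by rewrite ij eqxx.
exists t => //; split=> //; apply/negP => /aboveP[q qT [e l]].
by have := tmin q; rewrite /= qT e t2 eqxx => /(_ isT); ord_lia.
Qed.

Lemma nearest_above T x : has_above T x ->
  exists2 v, v \in T & [/\ v.2 = x.2, v.1 < x.1 &
    forall r, r \in T -> r.2 = x.2 -> r.1 < x.1 -> r.1 <= v.1].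
Proof.
case/aboveP=> q0 q0T [e0 l0].
have [|v /andP[/andP[vT /eqP v2] v1] vmax] := ex_maximal
  (fun q => (q \in T) && (q.2 == x.2) && (q.1 < x.1)) (fun q => nat_of_ord q.1) q0.
  by rewrite q0T e0 eqxx l0.
exists v => //; split=> // r rT r2 r1.
by have := vmax r; rewrite rT r2 eqxx r1; apply.
Qed.

(* The configuration of the counting argument around the diagonal position
   (m, m): inside the first m rows only row r0 leaves the first m columns,
   and inside the first m columns only column c0 leaves the first m rows. *)
Variables (T : {set pos}) (m c0 r0 : 'I_n).
Hypotheses (cT : cnm_set T) (c0_m : c0 < m) (r0_m : r0 < m).
Hypothesis rows_closed : forall p, p \in T -> p.1 < m -> p.1 != r0 -> p.2 < m.
Hypothesis cols_closed : forall p, p \in T -> p.2 < m -> p.2 != c0 -> p.1 < m.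

Lemma row_m_meets_c0 p : p \in T -> p.1 = m -> p.2 < m -> p.2 = c0.
Proof.
move=> pT p1 p2; apply/eqP/negPn/negP => pc.
by have := cols_closed pT p2 pc; ord_lia.
Qed.

Lemma c0_above_m : exists2 q, q \in T & q.2 = c0 /\ q.1 < m.
Proof.
have [t tT [t2 no_above_t]] := first_in_col c0 cT.
exists t => //; split=> //; case: (boolP (is_root t)) => [rt|nrt].
  by have := root_vals rt; ord_lia.
case: cT => _ X _ _ _; have := X t tT nrt; rewrite (negbTE no_above_t) /=.
case/leftP=> q qT [e l].
have qc : q.2 != c0 by apply/eqP => qc; rewrite qc -t2 in l; ord_lia.
have qm : q.2 < m by ord_lia.
by have := cols_closed qT qm qc; ord_lia.
Qed.

(* If (m, c0) is not a vertex, the first vertex of row m lies to the right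
   of column m and has r0 as the row of its nearest vertex above; moving that
   vertex to (m, c0) gives a twin. *)
Lemma twin_corner_missing u2 : u2 \in T -> u2.2 = c0 -> m < u2.1 ->
  (m, c0) \notin T -> has_twin T.
Proof.
move=> u2T u2_col u2_below mc0.
case: (cT) => _ X _ _ _.
have [u1 u1T [u1_col u1_above]] := c0_above_m.
have [x xT [x1 no_left_x]] := first_in_row m cT.
have x2 : m <= x.2.
  rewrite leqNgt; apply/negP => x2; move/negP: mc0; apply.
  by rewrite -x1 -(row_m_meets_c0 xT x1 x2) -surjective_pairing.
have nrx : ~~ is_root x by apply: nonroot_of_row; ord_lia.
have above_x : has_above T x by move: (X x xT nrx); rewrite (negbTE no_left_x) addbF.
have [v vT [v2 v1 v_nearest]] := nearest_above above_x.
have vr0 : v.1 = r0.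
  apply/eqP/negPn/negP => vr.
  have vm : v.1 < m by ord_lia.
  by have := rows_closed vT vm vr; ord_lia.
have no_above_v : ~~ has_above T v.
  apply/negP => /aboveP[q qT [e l]].
  have qr : q.1 != r0 by apply/eqP => qr; rewrite qr -vr0 in l; ord_lia.
  have qm : q.1 < m by ord_lia.
  by have := rows_closed qT qm qr; ord_lia.
have nrv : ~~ is_root v by apply: nonroot_of_col; ord_lia.
have left_v : has_left T v by move: (X v vT nrv); rewrite (negbTE no_above_v).
apply: (move_to_row_below (w := (m, c0)) cT vT xT u1T u2T left_v) => //=.
- move=> r rT r2 r1; rewrite leqNgt; apply/negP => rx.
  by have := v_nearest r rT (etrans r2 v2) rx; ord_lia.
- by ord_lia.
- by rewrite x1.
- by rewrite x1.
Qed.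

(* If both (m, c0) and (r0, m) are vertices, (m, m) is not (it would have
   vertices above and to its left), and moving (m, c0) to (m, m) gives a
   twin, provided (m, c0) has a vertex below it. *)
Lemma twin_corner_filled u2 : u2 \in T -> u2.2 = m -> m < u2.1 ->
  (m, c0) \in T -> (r0, m) \in T -> has_below T (m, c0) -> has_twin T.
Proof.
move=> u2T u2_col u2_below mc0 r0m below_mc0.
case: (cT) => _ X _ _ _.
have [u1 u1T [u1_col u1_above]] := c0_above_m.
have above_mc0 : has_above T (m, c0) by apply/aboveP; exists u1.
have mm : (m, m) \notin T.
  apply/negP => mmT; have nr : ~~ is_root (m, m) by apply: nonroot_of_row; ord_lia.
  have := X _ mmT nr.
  have -> : has_above T (m, m) by apply/aboveP; exists (r0, m).
  by have -> : has_left T (m, m) by apply/leftP; exists (m, c0).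
apply: (move_within_row (w := (m, m)) cT mc0 r0m u2T above_mc0 below_mc0) => //=.
- by move=> eq_m; move: c0_m; rewrite eq_m ltnn.
- move=> q qT q1 qv; rewrite ltnNge leq_eqVlt negb_or; apply/andP; split.
    apply: contraNneq mm => q2; suff -> : (m, m) = q by [].
    by apply: pos_inj; rewrite /= ?q1 ?q2.
  apply/negP => q2; move/negP: qv; apply; apply/eqP.
  by apply: pos_inj; rewrite /= ?q1 ?(row_m_meets_c0 qT q1 q2).
Qed.
End Corner.

(* Around every diagonal position (m, m) in the configuration of the
   counting argument, a CNM support has a twin; when (m, c0) is a vertex
   but (r0, m) is not, this is the first case for the transposed support. *)
Lemma corner_twin n (T : {set 'I_n * 'I_n}) (m c0 r0 : 'I_n) :
  cnm_set T -> c0 < m -> r0 < m ->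
  (forall p, p \in T -> p.1 < m -> p.1 != r0 -> p.2 < m) ->
  (forall p, p \in T -> p.2 < m -> p.2 != c0 -> p.1 < m) ->
  (exists2 q, q \in T & q.2 = c0 /\ m < q.1) ->
  (exists2 q, q \in T & q.1 = r0 /\ m < q.2) ->
  (exists2 q, q \in T & q.2 = m /\ m < q.1) ->
  ((m, c0) \in T -> has_below T (m, c0)) -> has_twin T.
Proof.
move=> cT c0_m r0_m rows_closed cols_closed [u uT [u2 u1]] [u' u'T [u'1 u'2]].
move=> [z zT [z2 z1]] below_mc0.
have [mc0|mc0] := boolP ((m, c0) \in T); last first.
  exact: twin_corner_missing rows_closed cols_closed _ uT u2 u1 mc0.
have [r0m|r0m] := boolP ((r0, m) \in T).
  exact: twin_corner_filled cols_closed _ zT z2 z1 mc0 r0m (below_mc0 mc0).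
apply: has_twin_tr => //.
apply: (@twin_corner_missing n (tr_set T) m r0 c0 (cnm_set_tr cT) r0_m c0_m
  _ _ (tr_pos u')).
- by move=> p; rewrite in_tr_set; apply: cols_closed.
- by move=> p; rewrite in_tr_set; apply: rows_closed.
- by rewrite in_tr_set tr_posK.
- by [].
- by [].
- by rewrite in_tr_set.
Qed.

(* A CNM support admits no nonempty closed initial block strictly smaller
   than the whole matrix: some vertex outside the block in both coordinates
   would have its parent outside the block as well, contradicting
   minimality. *)
Lemma no_closed_block n (T : {set 'I_n * 'I_n}) (k : 'I_n) : cnm_set T -> 0 < k ->
  (forall p, p \in T -> p.1 < k -> p.2 < k) ->
  (forall p, p \in T -> p.2 < k -> p.1 < k) -> False.
Proof.
case=> _ X _ R _ k0 rows_closed cols_closed; have [j kj] := R k.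
have jk : k <= j by rewrite leqNgt; apply/negP => l; have := cols_closed _ kj l; ord_lia.
have [|q /and3P[qT q1 q2] qmin] := ex_minimal
  (fun q => [&& q \in T, k <= q.1 & k <= q.2])
  (fun q => nat_of_ord q.1 + nat_of_ord q.2) (k, j).
  by rewrite kj leqnn jk.
have nrq : ~~ is_root q by apply: nonroot_of_row; ord_lia.
move: (X q qT nrq); case: (boolP (has_above T q)) => /= [/aboveP|_ /leftP][u uT [e l]].
- have uk : k <= u.1.
    by rewrite leqNgt; apply/negP => uk; have := rows_closed u uT uk; ord_lia.
  by have := qmin u; rewrite /= uT uk e q2 => /(_ isT); ord_lia.
- have uk : k <= u.2.
    by rewrite leqNgt; apply/negP => uk; have := cols_closed u uT uk; ord_lia.
  by have := qmin u; rewrite /= uT uk e q1 => /(_ isT); ord_lia.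
Qed.

Section Blocks.
Variables (n : nat) (s : 'S_n).

(* The indices below k whose image under s is also below k: for the leaf
   permutation, the rows of the k x k top-left block holding their leaf. *)
Definition block k : {set 'I_n} := [set i : 'I_n | (i < k) && (s i < k)].

Lemma card_low k : k <= n -> #|[set i : 'I_n | i < k]| = k.
Proof.
move=> kn; rewrite -sum1_card (eq_bigl (fun i : 'I_n => i < k)) => [|i].
  by rewrite (big_ord_narrow kn) sum1_card card_ord.
by rewrite inE.
Qed.

Lemma block_low k : block k \subset [set i : 'I_n | i < k].
Proof. by apply/subsetP => i; rewrite !inE => /andP[]. Qed.

Lemma block_subS k : block k \subset block k.+1.
Proof.
by apply/subsetP => i; rewrite !inE => /andP[a b]; rewrite !ltnS (ltnW a) (ltnW b).
Qed.

End Blocks.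

(* The column counterpart of the block: it is the image of the block by s. *)
Lemma card_block_inv n (s : 'S_n) k : #|block (s^-1)%g k| = #|block s k|.
Proof.
have -> : block (s^-1)%g k = s @: block s k.
  apply/setP => j; rewrite -{2}(permKV s j) mem_imset; last exact: perm_inj.
  by rewrite !inE permKV andbC.
by rewrite card_imset //; exact: perm_inj.
Qed.

Section BlockGrowth.
Variables (n : nat) (s : 'S_n) (m : nat).
Hypothesis m_lt_n : m < n.
Hypothesis block_stalls : #|block s m.+1| = #|block s m|.

Lemma stalled_block_out (i : 'I_n) : i <= m -> ~~ ((i < m) && (s i < m)) -> m < s i.
Proof.
move=> im out; rewrite ltnNge; apply/negP => sim; move/negP: out; apply.
have : block s m.+1 = block s m.
  by apply/esym/eqP; rewrite eqEcard block_subS block_stalls leqnn.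
by move/setP/(_ i); rewrite !inE !ltnS im sim.
Qed.

Lemma stalled_block_missing : 0 < m -> #|block s m| = m.-1 ->
  exists2 r0 : 'I_n, r0 < m &
    m < s r0 /\ forall i : 'I_n, i < m -> i != r0 -> s i < m.
Proof.
move=> m0 card_m.
have : #|[set i : 'I_n | i < m] :\: block s m| == 1.
  by rewrite cardsDS ?block_low // card_low ?card_m; [apply/eqP; lia | lia].
case/cards1P => r0 missing.
have : r0 \in [set i : 'I_n | i < m] :\: block s m by rewrite missing set11.
rewrite !inE => /andP[r0_out r0m]; exists r0 => //; split.
  by apply: stalled_block_out; [exact: ltnW | exact: r0_out].
move=> i im ir0; apply/negPn/negP => out.
have : i \in [set i : 'I_n | i < m] :\: block s m by rewrite !inE im out.
by rewrite missing inE (negbTE ir0).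
Qed.

End BlockGrowth.

Section LeafPermutation.
Variables (n : nat) (s : 'S_n) (T : {set 'I_n * 'I_n}).
Hypothesis cT : cnm_set T.
Hypothesis leaves : forall i j, leaf_set T (i, j) = (s i == j).

Lemma leaf_vertex i : (i, s i) \in T /\ ~~ has_below T (i, s i).
Proof. by have := leaves i (s i); rewrite eqxx => /andP. Qed.

(* The leaf of a row is its rightmost vertex: a vertex right of it would
   give it a vertex below. *)
Lemma leaf_rightmost p : p \in T -> p.2 <= s p.1.
Proof.
move=> pT; rewrite leqNgt; apply/negP => l.
have [leafT no_below] := leaf_vertex p.1; case: cT => _ _ B _ _.
by move/negP: no_below; apply; rewrite B //; apply/rightP; exists p.
Qed.

Lemma leaf_lowest p : p \in T -> p.1 <= (s^-1)%g p.2.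
Proof.
move=> pT; rewrite leqNgt; apply/negP => l.
have [_ no_below] := leaf_vertex ((s^-1)%g p.2); rewrite permKV in no_below.
by move/negP: no_below; apply; apply/belowP; exists p.
Qed.

(* A proper nonempty top-left block cannot contain all its leaves, since it
   would then be closed. *)
Lemma card_block_lt k : 0 < k -> k < n -> #|block s k| < k.
Proof.
move=> k0 kn; rewrite ltnNge; apply/negP => full.
have all_in (tt : 'S_n) (t : 'I_n) : #|block tt k| = k -> t < k -> tt t < k.
  move=> card_k tk; have : block tt k = [set i : 'I_n | i < k].
    apply/eqP; rewrite eqEcard block_low card_low; last exact: ltnW.
    by rewrite card_k leqnn.
  by move/setP/(_ t); rewrite !inE tk => /andP[].
have card_k : #|block s k| = k.
  apply/eqP; rewrite eqn_leq full andbT -{2}(card_low (ltnW kn)).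
  exact: subset_leq_card (block_low s k).
apply: (@no_closed_block n T (Ordinal kn) cT k0) => p pT pk /=.
- by have := leaf_rightmost pT; have := all_in _ _ card_k pk; ord_lia.
- have := leaf_lowest pT; have := all_in (s^-1)%g p.2; rewrite card_block_inv.
  by move/(_ card_k pk); ord_lia.
Qed.

Hypothesis no_twin : ~ has_twin T.

(* The block grows from m to m + 1: otherwise the rows and columns missing
   from it put T in the configuration of corner_twin. *)
Lemma block_grows m : 0 < m -> m.+1 < n ->
  #|block s m| = m.-1 -> #|block s m.+1| = m.-1 -> False.
Proof.
move=> m0 mn card_m card_m1; have m_lt_n : m < n by lia.
have stall : #|block s m.+1| = #|block s m| by rewrite card_m card_m1.
have stall_inv : #|block (s^-1)%g m.+1| = #|block (s^-1)%g m|.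
  by rewrite !card_block_inv.
have [r0 r0m [r0_out r0_only]] := stalled_block_missing m_lt_n stall m0 card_m.
have [c0 c0m [c0_out c0_only]] := stalled_block_missing m_lt_n stall_inv m0
  (etrans (card_block_inv _ _) card_m).
pose mo := Ordinal m_lt_n.
have s_m : m < s mo by apply: stalled_block_out stall _ _ _; rewrite /= ?ltnn.
have s_inv_m : m < (s^-1)%g mo.
  by apply: stalled_block_out stall_inv _ _ _; rewrite /= ?ltnn.
have leaf_col (j : 'I_n) : ((s^-1)%g j, j) \in T.
  by have [jT _] := leaf_vertex ((s^-1)%g j); rewrite permKV in jT.
apply: no_twin; apply: (@corner_twin n T mo c0 r0 cT c0m r0m).
- move=> p pT p1 pr0; have := r0_only _ p1 pr0.
  by have := leaf_rightmost pT; ord_lia.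
- move=> p pT p2 pc0; have := c0_only _ p2 pc0.
  by have := leaf_lowest pT; ord_lia.
- by exists ((s^-1)%g c0, c0).
- by exists (r0, s r0); [case: (leaf_vertex r0) |].
- by exists ((s^-1)%g mo, mo).
- move=> mc0T; have [//|no_below] := boolP (has_below T (mo, c0)).
  have : leaf_set T (mo, c0) by rewrite /leaf_set mc0T no_below.
  by rewrite leaves => /eqP s_mo; rewrite s_mo in s_m; ord_lia.
Qed.

Lemma card_block m : 0 < m -> m < n -> #|block s m| = m.-1.
Proof.
elim: m => [//|m IH] _ mn.
have [m0|m0] := posnP m.
  by subst m; have := card_block_lt (ltn0Sn 0) mn; lia.
have card_m := IH m0 (ltnW mn).
have grow := subset_leq_card (block_subS s m).
have bound := card_block_lt (ltn0Sn m) mn.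
have [stalled|] := eqVneq #|block s m.+1| m.-1.
  by case: (block_grows m0 mn card_m stalled).
by rewrite card_m in grow; lia.
Qed.

End LeafPermutation.

Section MainTheorem.
Variable n : nat.

Lemma perm_mx_entry (s : 'S_n) (i j : 'I_n) :
  ((perm_mx s : 'M[int]_n) i j == 1%R) = (s i == j).
Proof. by rewrite perm_mxEsub !mxE; case: (s i == j). Qed.

Lemma leaves_of_perm (M : 'M[int]_n) (s : 'S_n) :
  is_cnm M -> leaf_mx M = perm_mx s ->
  forall i j, leaf_set (Defs.support M) (i, j) = (s i == j).
Proof.
move=> cM lM i j; have := congr1 (fun A : 'M[int]_n => A i j) lM.
rewrite perm_mxEsub !mxE is_leafE; last exact: cnm_set_support.
by case: (leaf_set _ _); case: (s i == j) => // /eqP.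
Qed.

(* A CNM determined by its leaf matrix has a support without twin: a twin
   would be the support of another CNM with the same leaf matrix. *)
Lemma unique_no_twin (M : 'M[int]_n) :
  is_cnm M ->
  (forall M' : 'M[int]_n, is_cnm M' /\ leaf_mx M' = leaf_mx M -> M = M') ->
  ~ has_twin (Defs.support M).
Proof.
move=> cM unique [T' [cT' leaves' T'M]].
have leaf_eq : leaf_mx (mx_of_set T') = leaf_mx M.
  apply/matrixP => i j; rewrite !mxE !is_leafE ?support_mx_of_set ?leaves' //.
  exact: cnm_set_support.
have eqM := unique _ (conj (cnm_mx_of_set cT') leaf_eq).
by move/eqP: T'M; apply; rewrite eqM support_mx_of_set.
Qed.

Lemma Lsubset_perm (s : 'S_n) k : 0 < k ->
  [set p in Lsubset n k | (perm_mx s : 'M[int]_n) p.1 p.2 == 1%R] =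
  [set (i, s i) | i in block s k :\: block s k.-1].
Proof.
move=> k0; apply/setP => p; apply/idP/imsetP.
- rewrite !inE perm_mx_entry => /andP[pL /eqP e]; exists p.1.
    by rewrite !inE; move: pL; rewrite -e /=; lia.
  by rewrite e; case: p {pL e}.
- case=> i; rewrite !inE => h ->; rewrite /= perm_mx_entry eqxx andbT.
  by move: h; lia.
Qed.

End MainTheorem.

Unset Implicit Arguments.
Local Open Scope ring_scope.

Theorem lemma3p3 (n : nat) (P : 'M[int]_n) :
  (2 <= n)%N ->
  is_perm_mx P ->
  (exists! M : 'M[int]_n, is_cnm M /\ leaf_mx M = P) ->
  forall k : nat, (2 <= k <= n - 1)%N ->
    #|[set p in Lsubset n k | P p.1 p.2 == 1]| = 1%N.
Proof.
move=> n2 /is_perm_mxP[s ->] [M [[cM lM] unique]] k /andP[k2 kn].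
have cT := cnm_set_support cM.
have leaves := leaves_of_perm cM lM.
have no_twin : ~ has_twin (Defs.support M).
  by apply: unique_no_twin => // M'; rewrite lM; apply: unique.
rewrite Lsubset_perm ?(ltnW k2) // card_imset; last by move=> i j [].
rewrite cardsDS; last by rewrite -{2}(prednK (ltnW k2)) block_subS.
by rewrite !(card_block cT leaves no_twin); lia.
Qed.
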